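(* Let $X,Y\in\mathcal{H}$ be random variables, $\mathbb{E}$ a sub-linear expectation and $(\mathbb{V},v)$ the pair of capacities generated by $\mathbb{E}$. If $X$ is independent of $Y$ under $\mathbb{E}$, then for all Borel sets $D,G\subset\mathbb{R}$, $$\mathbb{V}(X\in D,Y\in G)=\mathbb{V}(X\in D)\,\mathbb{V}(Y\in G)\quad\text{and}\quad v(X\in D,Y\in G)=v(X\in D)\,v(Y\in G),$$ i.e. $X$ is pairwise independent of $Y$ under both $\mathbb{V}$ and $v$.
   Context: Let $(\Omega,\mathcal{F})$ be a measurable space, $\mathcal{P}$ a nonempty set of probability measures on it, and $\mathcal{H}$ a set of real random variables on $(\Omega,\mathcal{F})$ containing indicator-type functions of the random variables considered. The sub-linear expectation is $\mathbb{E}[\xi]:=\sup_{P\in\mathcal{P}}E_P[\xi]$; it generates the capacities $\mathbb{V}(A):=\mathbb{E}[I_A]=\sup_{P\in\mathcal{P}}P(A)$ and $v(A):=-\mathbb{E}[-I_A]=\inf_{P\in\mathcal{P}}P(A)$. Independence (Peng): $X$ is independent of $Y$ under $\mathbb{E}$ if for every measurable $\varphi$ on $\mathbb{R}^2$ (with relevant quantities in $\mathcal{H}$), $\mathbb{E}[\varphi(Y,X)]=\mathbb{E}[\overline{\varphi}(Y)]$ with $\overline{\varphi}(y):=\mathbb{E}[\varphi(y,X)]$. *)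

From HB Require Import structures.
From mathcomp Require Import all_boot all_order all_algebra.
From mathcomp Require Import all_classical all_reals all_analysis.
Set Implicit Arguments. Unset Strict Implicit. Unset Printing Implicit Defensive.
Import Order.TTheory GRing.Theory Num.Theory.
Local Open Scope classical_set_scope.
Local Open Scope ring_scope.
Local Open Scope ereal_scope.

Definition sublinE (d : measure_display) (T : measurableType d) (R : realType)
  (Ps : set (probability T R)) (xi : T -> R) : \bar R :=
  ereal_sup [set (\int[P]_w (xi w)%:E) | P in Ps].

Definition Vcap (d : measure_display) (T : measurableType d) (R : realType)
  (Ps : set (probability T R)) (A : set T) : \bar R :=
  sublinE Ps (\1_A).

Definition vcap (d : measure_display) (T : measurableType d) (R : realType)
  (Ps : set (probability T R)) (A : set T) : \bar R :=
  - sublinE Ps (fun w => - \1_A w)%R.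

Definition indep_sublin (d : measure_display) (T : measurableType d)
  (R : realType) (Ps : set (probability T R)) (H : set (T -> R))
  (X Y : T -> R) : Prop :=
  forall phi : (R * R)%type -> R,
    measurable_fun setT phi ->
    H (fun w => phi (Y w, X w)) ->
    (forall y : R, H (fun w => phi (y, X w))) ->
    H (fun w => fine (sublinE Ps (fun w' => phi (Y w, X w')))) ->
    sublinE Ps (fun w => phi (Y w, X w)) =
    sublinE Ps (fun w => fine (sublinE Ps (fun w' => phi (Y w, X w')))).

From HB Require Import structures.
From mathcomp Require Import all_boot all_order all_algebra.
From mathcomp Require Import all_classical all_reals all_analysis.
Import Order.TTheory GRing.Theory Num.Theory.
Local Open Scope classical_set_scope.
Local Open Scope ring_scope.
Local Open Scope ereal_scope.

(* Both capacities are values of E at scaled indicators k 1_A (k = 1 for V,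
   k = -1 for v).  Independence, applied to phi(y, x) = k 1_G(y) 1_D(x),
   gives E[k 1_{X in D, Y in G}] = E[a 1_{Y in G}] where a = E[k 1_{X in D}];
   since a has the sign of k, a = |a| k and positive homogeneity of E on
   indicators gives E[a 1_{Y in G}] = |a| E[k 1_{Y in G}]. *)

Section sublinE_indicator.
Context {d : measure_display} {T : measurableType d} {R : realType}
  {Ps : set (probability T R)}.

Lemma sublinE_indic (k : R) (A : set T) : measurable A ->
  sublinE Ps (fun w => k * \1_A w)%R = ereal_sup [set k%:E * P A | P in Ps].
Proof.
move=> mA; rewrite /sublinE; congr ereal_sup; apply: eq_imagel => P _.
under eq_integral do rewrite EFinM.
rewrite integralZl //; last exact: integrable_indic.
by rewrite integral_indic // setIT.
Qed.

Lemma sublinE_indicZ (c k : R) (A : set T) :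
  Ps !=set0 -> (0 <= c)%R -> measurable A ->
  sublinE Ps (fun w => c * k * \1_A w)%R = c%:E * sublinE Ps (fun w => k * \1_A w)%R.
Proof.
move=> [P0 PsP0] c_ge0 mA; rewrite !sublinE_indic // -ereal_supZl //; last first.
  by apply/set0P; exists (k%:E * P0 A); exists P0.
congr ereal_sup; rewrite image_comp; apply: eq_imagel => P _ /=.
by rewrite EFinM muleA.
Qed.

Lemma sublinE_indic_fin_num (k : R) (A : set T) : Ps !=set0 -> measurable A ->
  sublinE Ps (fun w => k * \1_A w)%R \is a fin_num.
Proof.
move=> [P0 PsP0] mA; rewrite sublinE_indic // fin_numElt; apply/andP; split.
  apply: (@lt_le_trans _ _ (k%:E * P0 A)).
    by rewrite -(fineK (fin_num_measure P0 A mA)) -EFinM ltNyr.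
  by apply: ereal_sup_ubound; exists P0.
apply: (@le_lt_trans _ _ `|k|%:E); last exact: ltry.
apply: ge_ereal_sup => _ [P _ <-].
have PA0 : (0 <= fine (P A))%R by rewrite fine_ge0.
have PA1 : (fine (P A) <= 1)%R.
  by rewrite -lee_fin fineK ?fin_num_measure ?probability_le1.
rewrite -(fineK (fin_num_measure P A mA)) -EFinM lee_fin.
by rewrite (le_trans (ler_norm _)) // normrM (ger0_norm PA0) ler_piMr.
Qed.

Lemma VcapE (A : set T) : measurable A ->
  Vcap Ps A = sublinE Ps (fun w => 1 * \1_A w)%R.
Proof. by move=> mA; congr sublinE; apply: funext => w; rewrite mul1r. Qed.

Lemma vcapE (A : set T) : measurable A ->
  vcap Ps A = - sublinE Ps (fun w => -1 * \1_A w)%R.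
Proof.
by move=> mA; rewrite /vcap; congr (- sublinE _ _); apply: funext => w; rewrite mulN1r.
Qed.

Lemma Vcap_ge0 (A : set T) : Ps !=set0 -> measurable A -> 0 <= Vcap Ps A.
Proof.
move=> [P0 PsP0] mA; rewrite VcapE // sublinE_indic //.
apply: (@le_trans _ _ (1%:E * P0 A)); first by rewrite mul1e.
by apply: ereal_sup_ubound; exists P0.
Qed.

Lemma vcap_ge0 (A : set T) : measurable A -> 0 <= vcap Ps A.
Proof.
move=> mA; rewrite vcapE // sublinE_indic // oppe_ge0.
by apply: ge_ereal_sup => _ [P _ <-]; rewrite mulN1e oppe_le0.
Qed.

End sublinE_indicator.

Lemma measurable_indicM {R : realType} (c : R) {D G : set R} :
  measurable D -> measurable G ->
  measurable_fun setT (fun z : R * R => c * (\1_D z.1 * \1_G z.2))%R.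
Proof.
move=> mD mG; apply: measurable_realfun.measurable_funM; first exact: measurable_cst.
apply: measurable_realfun.measurable_funM; apply: measurableT_comp => //;
  exact: measurable_realfun.measurable_indic.
Qed.

Section pairwise_independence.
Context {d : measure_display} {T : measurableType d} {R : realType}
  {Ps : set (probability T R)} {H : set (T -> R)} {X Y : T -> R}.
Hypotheses (Ps0 : Ps !=set0) (mX : measurable_fun setT X)
  (mY : measurable_fun setT Y).
Hypothesis H_bounded : forall psi : (R * R)%type -> R, measurable_fun setT psi ->
  (exists M : R, forall z, (`|psi z| <= M)%R) -> H (fun w => psi (X w, Y w)).
Hypothesis XY_indep : indep_sublin Ps H X Y.

Let measurable_preimX {D : set R} : measurable D -> measurable (X @^-1` D).
Proof. by move=> mD; rewrite -[X @^-1` D]setTI; exact: mX. Qed.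

Let measurable_preimY {G : set R} : measurable G -> measurable (Y @^-1` G).
Proof. by move=> mG; rewrite -[Y @^-1` G]setTI; exact: mY. Qed.

Lemma H_indicM (c : R) (D G : set R) : measurable D -> measurable G ->
  H (fun w => c * (\1_D (X w) * \1_G (Y w)))%R.
Proof.
move=> mD mG; apply: (H_bounded (fun z => c * (\1_D z.1 * \1_G z.2))%R).
  exact: measurable_indicM.
exists `|c|%R => z; rewrite normrM ler_piMr // !indicE.
by case: (_ \in D); case: (_ \in G); rewrite ?mulr1 ?mulr0 ?normr1 ?normr0.
Qed.

Lemma sublinE_indic_preimI (k : R) (D G : set R) : measurable D -> measurable G ->
  sublinE Ps (fun w => k * \1_(X @^-1` D `&` Y @^-1` G) w)%R =
  sublinE Ps (fun w => fine (sublinE Ps (fun w' => k * \1_(X @^-1` D) w')%R)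
                       * \1_(Y @^-1` G) w)%R.
Proof.
move=> mD mG.
have mXD := measurable_preimX mD.
set a := fine _.
pose phi (z : R * R) := (k * (\1_G z.1 * \1_D z.2))%R.
have phi_inner w : fine (sublinE Ps (fun w' => phi (Y w, X w'))) =
    (a * \1_(Y @^-1` G) w)%R.
  have -> : (fun w' => phi (Y w, X w')) =
      (fun w' => \1_G (Y w) * k * \1_(X @^-1` D) w')%R.
    by apply: funext => w'; rewrite /phi /= mulrCA mulrA.
  by rewrite sublinE_indicZ // fineM ?sublinE_indic_fin_num // mulrC.
have phi_diag : (fun w => phi (Y w, X w)) =
    (fun w => k * \1_(X @^-1` D `&` Y @^-1` G) w)%R.
  by apply: funext => w; rewrite /phi indicI /= (mulrC (\1_G _)).
rewrite -phi_diag -(funext phi_inner).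
apply: (XY_indep phi (measurable_indicM k mG mD)).
- by rewrite phi_diag indicI; exact: H_indicM.
- move=> y; have -> : (fun w => phi (y, X w)) =
      (fun w => k * \1_G y * (\1_D (X w) * \1_setT (Y w)))%R.
    by apply: funext => w; rewrite /phi indicT /= mulr1 mulrA.
  exact: H_indicM.
- have -> : (fun w => fine (sublinE Ps (fun w' => phi (Y w, X w')))) =
      (fun w => a * (\1_setT (X w) * \1_G (Y w)))%R.
    by apply: funext => w; rewrite phi_inner indicT /= mul1r.
  exact: H_indicM.
Qed.

Lemma Vcap_preimI (D G : set R) : measurable D -> measurable G ->
  Vcap Ps (X @^-1` D `&` Y @^-1` G) = Vcap Ps (X @^-1` D) * Vcap Ps (Y @^-1` G).
Proof.
move=> mD mG.
have mXD := measurable_preimX mD.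
have mYG := measurable_preimY mG.
have VXD_fin : Vcap Ps (X @^-1` D) \is a fin_num.
  by rewrite VcapE // sublinE_indic_fin_num.
rewrite VcapE; last exact: measurableI.
rewrite sublinE_indic_preimI // -VcapE // -[fine _]mulr1.
by rewrite sublinE_indicZ ?fine_ge0 ?Vcap_ge0 // fineK // -VcapE.
Qed.

Lemma vcap_preimI (D G : set R) : measurable D -> measurable G ->
  vcap Ps (X @^-1` D `&` Y @^-1` G) = vcap Ps (X @^-1` D) * vcap Ps (Y @^-1` G).
Proof.
move=> mD mG.
have mXD := measurable_preimX mD.
have mYG := measurable_preimY mG.
have vXD_fin : vcap Ps (X @^-1` D) \is a fin_num.
  by rewrite vcapE // fin_numN sublinE_indic_fin_num.
have sublinE_N1XD :
    sublinE Ps (fun w => -1 * \1_(X @^-1` D) w)%R = - vcap Ps (X @^-1` D).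
  by rewrite vcapE // oppeK.
rewrite vcapE; last exact: measurableI.
rewrite sublinE_indic_preimI // sublinE_N1XD fineN -mulrN1.
rewrite sublinE_indicZ ?fine_ge0 ?vcap_ge0 // fineK //.
by rewrite [vcap _ (Y @^-1` G)]vcapE // muleN.
Qed.

End pairwise_independence.

Theorem lemma1 (d : measure_display) (T : measurableType d) (R : realType)
  (Ps : set (probability T R)) (H : set (T -> R)) (X Y : T -> R) :
  Ps !=set0 ->
  measurable_fun setT X -> measurable_fun setT Y ->
  H X -> H Y ->
  (* H contains the bounded Borel ("indicator-type") functions of (X, Y) *)
  (forall psi : (R * R)%type -> R, measurable_fun setT psi ->
     (exists M : R, forall z, (`|psi z| <= M)%R) ->
     H (fun w => psi (X w, Y w))) ->
  indep_sublin Ps H X Y ->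
  forall D G : set R, measurable D -> measurable G ->
    Vcap Ps (X @^-1` D `&` Y @^-1` G) = Vcap Ps (X @^-1` D) * Vcap Ps (Y @^-1` G)
    /\ vcap Ps (X @^-1` D `&` Y @^-1` G) = vcap Ps (X @^-1` D) * vcap Ps (Y @^-1` G).
Proof.
move=> Ps0 mX mY _ _ H_bounded XY_indep D G mD mG.
by split; [exact: (Vcap_preimI Ps0 mX mY H_bounded XY_indep)
           | exact: (vcap_preimI Ps0 mX mY H_bounded XY_indep)].
Qed.
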